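(* Let $X$ be a consonant Wilker space. Then $\Sigma\mathcal O(X)$ is sober.
   Context: $\mathcal O(X)$ is the lattice of open subsets of $X$ ordered by inclusion and $\Sigma\mathcal O(X)$ is this lattice with its Scott topology (a family $\mathcal F$ is Scott open iff it is an upper set and for every directed family $\mathcal D$ of open sets, $\bigcup\mathcal D\in\mathcal F$ implies $\mathcal D\cap\mathcal F\neq\emptyset$). $X$ is a Wilker space if for any open sets $U_1,U_2$ and compact set $K$ with $K\subseteq U_1\cup U_2$ there are compact sets $K_1\subseteq U_1$, $K_2\subseteq U_2$ with $K\subseteq K_1\cup K_2$. A $T_0$ space $X$ is consonant if for every Scott open $\mathcal F\subseteq\mathcal O(X)$ and every $U\in\mathcal F$ there is a compact saturated set $Q$ (saturated = upper set in the specialization order) with $U\in\Phi(Q)\subseteq\mathcal F$, where $\Phi(Q)=\{V\in\mathcal O(X)\mid Q\subseteq V\}$. A $T_0$ space is sober if every irreducible closed set equals $\overline{\{x\}}$ for some point $x$. *)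

From mathcomp Require Import all_boot all_order.
From mathcomp Require Import boolp classical_sets topology.
Set Implicit Arguments. Unset Strict Implicit. Unset Printing Implicit Defensive.
Local Open Scope classical_set_scope.

Section GenTop.
Variables (T : Type) (O : set (set T)).

Definition gclosed (C : set T) : Prop := O (~` C).

Definition gclosure (A : set T) : set T :=
  \bigcap_(C in [set C | gclosed C /\ A `<=` C]) C.

Definition girreducible (C : set T) : Prop :=
  C !=set0 /\
  forall C1 C2, gclosed C1 -> gclosed C2 -> C `<=` C1 `|` C2 ->
    C `<=` C1 \/ C `<=` C2.

Definition gT0 : Prop :=
  forall x y : T, (forall U, O U -> (U x <-> U y)) -> x = y.

Definition gsober : Prop :=
  gT0 /\ forall C, gclosed C -> girreducible C -> exists x, C = gclosure [set x].
End GenTop.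

Definition OX (X : topologicalType) := {U : set X | open U}.

Definition directedO (X : topologicalType) (D : set (OX X)) : Prop :=
  D !=set0 /\
  forall d1 d2, D d1 -> D d2 ->
    exists2 d3, D d3 & sval d1 `<=` sval d3 /\ sval d2 `<=` sval d3.

Definition scott_open (X : topologicalType) (F : set (OX X)) : Prop :=
  (forall U V : OX X, F U -> sval U `<=` sval V -> F V) /\
  (forall D : set (OX X), directedO D ->
     forall W : OX X, sval W = \bigcup_(d in D) sval d -> F W ->
       exists2 d, D d & F d).

Definition SigmaO_sober (X : topologicalType) : Prop :=
  gsober (@scott_open X).

(** saturated = upper set in the specialization order *)
Definition saturated (X : topologicalType) (Q : set X) : Prop :=
  forall x y : X, Q x -> (forall U, open U -> U x -> U y) -> Q y.

Definition wilker (X : topologicalType) : Prop :=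
  forall (U1 U2 K : set X), open U1 -> open U2 -> compact K ->
    K `<=` U1 `|` U2 ->
    exists K1 K2 : set X, [/\ compact K1, compact K2, K1 `<=` U1, K2 `<=` U2
                          & K `<=` K1 `|` K2].

Definition consonant (X : topologicalType) : Prop :=
  gT0 (@open X) /\
  forall F : set (OX X), scott_open F -> forall U : OX X, F U ->
    exists Q : set X, [/\ compact Q, saturated Q, Q `<=` sval U
      & forall V : OX X, Q `<=` sval V -> F V].

From mathcomp Require Import all_boot all_order.
From mathcomp Require Import boolp classical_sets topology.
Set Implicit Arguments. Unset Strict Implicit. Unset Printing Implicit Defensive.
Local Open Scope classical_set_scope.

(* A Scott-closed set C of open sets is a lower set closed under directed
   unions, and the closure of a point U is the principal ideal of U.  If C is
   moreover irreducible, it is closed under binary unions: were U u V outside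
   C, consonance would give a compact saturated Q inside U u V with Phi(Q)
   missing C, the Wilker property would split Q into compacts K1 in U and
   K2 in V, and then C would be covered by the two Scott-closed sets
   ~Phi(K1), ~Phi(K2), hence lie in one of them, which is absurd as U and V
   are in C.  So C is directed, its union u belongs to C, and C is the
   closure of u. *)

Section ScottTopology.
Variable X : topologicalType.
Implicit Types (U V : OX X) (C D : set (OX X)) (K : set X).

Definition OX_setU U V : OX X :=
  exist _ (sval U `|` sval V) (openU (svalP U) (svalP V)).

Definition OX_bigcup D : OX X :=
  exist _ (\bigcup_(d in D) sval d) (bigcup_open (fun d _ => svalP d)).

Lemma OX_inj U V : sval U = sval V -> U = V.
Proof. by case: U => U oU; case: V => V oV /= eUV; apply: eq_exist. Qed.

Lemma scott_open_not_sub U : scott_open [set V | ~ sval V `<=` sval U].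
Proof.
split=> [V W nVU VW WU|D _ W eW]; first by apply: nVU; apply: subset_trans WU.
rewrite /= eW => nWU; apply/exists2P; apply: contrapT => nDU.
apply: nWU => x [d Dd dx].
by apply: contrapT => nUx; apply: nDU; exists d; split=> // dU; apply: nUx; apply: dU.
Qed.

Lemma scott_closed_sub U : gclosed (@scott_open X) [set V | sval V `<=` sval U].
Proof. exact: scott_open_not_sub. Qed.

Lemma scott_T0 : gT0 (@scott_open X).
Proof.
move=> U V UV; apply/OX_inj/seteqP; split; apply: contrapT => nsub.
- by have /= := (UV _ (scott_open_not_sub V)).1 nsub; apply.
- by have /= := (UV _ (scott_open_not_sub U)).2 nsub; apply.
Qed.

(* Compactness through proper filters: the traces K \ d, d in D, generate a
   proper filter when no d covers K, and a cluster point of it in K lies in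
   some open d, which then meets K \ d. *)
Lemma compact_directed_cover K D : compact K -> directedO D ->
  K `<=` \bigcup_(d in D) sval d -> exists2 d, D d & K `<=` sval d.
Proof.
move=> cK [[d0 Dd0] Ddir] KD; apply/exists2P; apply: contrapT => nDK.
have trace_neq0 d : D d -> K `\` sval d !=set0.
  move=> Dd; apply/set0P/negP => /eqP; rewrite setD_eq0 => Kd.
  by apply: nDK; exists d.
pose G := filter_from D (fun d : OX X => K `\` sval d).
have FG : Filter G.
  apply: filter_from_filter; first by exists d0.
  move=> i j Di Dj; have [k Dk [ik jk]] := Ddir i j Di Dj.
  by exists k => // x [Kx nkx]; split; split=> // ?; apply: nkx; [apply: ik|apply: jk].
have GK : G K by exists d0 => // x [].
have [x [Kx clx]] := cK G (filter_from_proper FG trace_neq0) GK.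
have [d Dd dx] := KD x Kx.
have dnbhs : nbhs x (sval d) by apply: open_nbhs_nbhs; split=> //; exact: svalP.
have Gd : G (K `\` sval d) by exists d.
by have [y [[_ ndy] dy]] := clx _ _ Gd dnbhs.
Qed.

Lemma scott_open_Phi K : compact K -> scott_open [set V | K `<=` sval V].
Proof.
move=> cK; split=> [V W KV VW|D Ddir W eW]; first exact: subset_trans KV VW.
rewrite /= eW => KD.
have [d Dd Kd] := compact_directed_cover cK Ddir KD; by exists d.
Qed.

Section ScottClosed.
Variable C : set (OX X).
Hypothesis Cclosed : gclosed (@scott_open X) C.

Lemma scott_closed_down U V : C U -> sval V `<=` sval U -> C V.
Proof. by move=> CU VU; apply: contrapT => nCV; exact: Cclosed.1 V U nCV VU CU. Qed.

Lemma scott_closed_bigcup D : directedO D -> D `<=` C -> C (OX_bigcup D).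
Proof.
move=> Ddir DC; apply: contrapT => nCD.
by have [d Dd] := Cclosed.2 D Ddir (OX_bigcup D) erefl nCD; apply; apply: DC.
Qed.

End ScottClosed.

Lemma scott_closure1 U :
  gclosure (@scott_open X) [set U] = [set V | sval V `<=` sval U].
Proof.
apply/seteqP; split=> [V|V VU C [Cclosed UC]].
  by apply; split; [exact: scott_closed_sub | by move=> _ ->].
by apply: (scott_closed_down Cclosed (UC U erefl)); exact: VU.
Qed.

End ScottTopology.

Section ConsonantWilker.
Variable X : topologicalType.
Hypotheses (Xcons : consonant X) (Xwilker : wilker X).

Lemma scott_irreducible_setU (C : set (OX X)) U V :
  gclosed (@scott_open X) C -> girreducible (@scott_open X) C ->
  C U -> C V -> C (OX_setU U V).
Proof.
move=> Cclosed [_ Cirr] CU CV; apply: contrapT => nCUV.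
have [Q [cQ _ QUV PhiQ]] := Xcons.2 _ Cclosed _ nCUV.
have [K1 [K2 [cK1 cK2 K1U K2V QK]]] := Xwilker (svalP U) (svalP V) cQ QUV.
have notPhi_closed K :
    compact K -> gclosed (@scott_open X) (~` [set W | K `<=` sval W]).
  by move=> cK; rewrite /gclosed setCK; exact: scott_open_Phi.
have C_notPhi : C `<=` ~` [set W | K1 `<=` sval W] `|` ~` [set W | K2 `<=` sval W].
  move=> W CW; apply: contrapT => /not_orP[/contrapT K1W /contrapT K2W].
  by apply: (PhiQ W _ CW) => x /QK[]; [apply: K1W | apply: K2W].
by case: (Cirr _ _ (notPhi_closed _ cK1) (notPhi_closed _ cK2) C_notPhi) => nPhi;
  [exact: nPhi _ CU K1U | exact: nPhi _ CV K2V].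
Qed.

Lemma scott_irreducible_directed (C : set (OX X)) :
  gclosed (@scott_open X) C -> girreducible (@scott_open X) C -> directedO C.
Proof.
move=> Cclosed Cirr; split; first exact: Cirr.1.
move=> U V CU CV; exists (OX_setU U V); first exact: scott_irreducible_setU.
by split=> x ?; [left | right].
Qed.

End ConsonantWilker.

Theorem theorem4p18 (X : topologicalType) :
  consonant X -> wilker X -> SigmaO_sober X.
Proof.
move=> Xcons Xwilker; split=> [|C Cclosed Cirr]; first exact: scott_T0.
have Cdir := scott_irreducible_directed Xcons Xwilker Cclosed Cirr.
have Ccup : C (OX_bigcup C) := scott_closed_bigcup Cclosed Cdir (@subset_refl _ C).
exists (OX_bigcup C); rewrite scott_closure1; apply/seteqP; split=> [V CV|V VC].
- by move=> x Vx; exists V.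
- by apply: (scott_closed_down Cclosed Ccup); exact: VC.
Qed.
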